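(* Any set of reflections of $G_7$ containing at least one element of each of $R'=R_1\cup R_1^{-1}$, $R''=R_2\cup R_2^{-1}$ and $S$ generates the entire group $G_7$.
   Context: Let $G_7$ be the subgroup of $GL_2(\mathbb{C})$ generated by $s=\begin{bmatrix}1&0\\0&-1\end{bmatrix}$, $t=\frac14\begin{bmatrix}(1+\sqrt3)+(-1+\sqrt3)i & (1+\sqrt3)+(-1+\sqrt3)i\\ (-1+\sqrt3)-(1+\sqrt3)i & (1-\sqrt3)+(1+\sqrt3)i\end{bmatrix}$ and $u=t^{\top}$ (presentation $\langle s,t,u\mid s^2=t^3=u^3=1,\ stu=ust=tus\rangle$, order $144$). A reflection is a linear map of $\mathbb{C}^2$ whose fixed space has dimension $1$. $G_7$ has $22$ reflections in five conjugacy classes: $S$ (class of $s$, six reflections of order $2$), $R_1$ (class of $t$), $R_2$ (class of $u$), $R_1^{-1}=\{r^{-1}:r\in R_1\}$ and $R_2^{-1}=\{r^{-1}:r\in R_2\}$, the last four each consisting of four reflections of order $3$. *)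

From HB Require Import structures.
From mathcomp Require Import all_boot all_order all_algebra all_field.
Set Implicit Arguments. Unset Strict Implicit. Unset Printing Implicit Defensive.
Import Order.TTheory GRing.Theory Num.Theory.
Local Open Scope ring_scope.

Notation M2 := 'M[algC]_2.

Definition mx2 (a b c d : algC) : M2 :=
  \matrix_(i < 2, j < 2)
    if (i : nat) == 0%N then (if (j : nat) == 0%N then a else b)
    else (if (j : nat) == 0%N then c else d).

Definition r3 : algC := sqrtC 3.

Definition s7 : M2 := mx2 1 0 0 (-1).
Definition t7 : M2 :=
  (4%:R)^-1 *: mx2 ((1 + r3) + (-1 + r3) * 'i) ((1 + r3) + (-1 + r3) * 'i)
                   ((-1 + r3) - (1 + r3) * 'i) ((1 - r3) + (1 + r3) * 'i).
Definition u7 : M2 := t7^T.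

Inductive gen (A : M2 -> Prop) : M2 -> Prop :=
  | gen1 : gen A 1
  | gen_in x : A x -> gen A x
  | genM x y : gen A x -> gen A y -> gen A (x * y)
  | genV x : gen A x -> gen A x^-1.

Definition G7 : M2 -> Prop := gen (fun x => x = s7 \/ x = t7 \/ x = u7).

Definition is_reflection (g : M2) : Prop := \rank (kermx (g - 1)) = 1%N.

Definition cls7 (x : M2) (g : M2) : Prop :=
  exists2 h, G7 h & g = h^-1 * x * h.

Definition S7 := cls7 s7.
Definition R1 := cls7 t7.
Definition R2 := cls7 u7.
Definition inv_set (A : M2 -> Prop) (g : M2) : Prop := A g^-1.

From Stdlib Require Import ZArith.
From mathcomp Require Import all_boot all_order all_algebra all_field.
From mathcomp Require Import ring ssrZ.
Set Implicit Arguments. Unset Strict Implicit. Unset Printing Implicit Defensive.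
Import GRing.Theory Num.Theory.
Local Open Scope ring_scope.

(** G7 is finite and its entries lie in Q(sqrt 3, i), with denominators dividing 4,
    so everything can be decided by exact computation over pairs of pairs of dyadic
    rationals. Enumerating G7 as the closure of {1} under right multiplication by
    s, t, u gives the classes R2 and S. Replacing an element of R1^-1 by its inverse
    and conjugating by an element of G7, we may assume that the subgroup contains t
    itself; for each of the 4 * 6 choices of further elements of R2 and S, the
    closure of {1} under right multiplication by the three elements contains s, t
    and u. *)

Definition subgroup (H : M2 -> Prop) :=
  [/\ H 1, forall x y, H x -> H y -> H (x * y) & forall x, H x -> H x^-1].

Lemma gen_subgroup (X : M2 -> Prop) : subgroup (gen X).
Proof. by split; [exact: gen1 | exact: genM | exact: genV]. Qed.

Lemma gen_min (X H : M2 -> Prop) :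
  subgroup H -> (forall x, X x -> H x) -> forall g, gen X g -> H g.
Proof.
by case=> H1 HM HV XH g; elim=> [|x /XH|x y _ + _|x _] //; [exact: HM | exact: HV].
Qed.

Lemma gen_class_or_inv (X A : M2 -> Prop) x :
  X x -> A x \/ inv_set A x -> exists2 y, A y & gen X y.
Proof. by move=> /gen_in Xx [Ax|Ax]; [exists x | exists x^-1 => //; exact: genV]. Qed.

Lemma invr_conj (R : unitRingType) (h x : R) :
  h \is a GRing.unit -> (h^-1 * x * h)^-1 = h^-1 * x^-1 * h.
Proof.
move=> hU; have [xU|xNU] := boolP (x \is a GRing.unit).
  by rewrite !invrM ?unitrMr ?unitrV // invrK mulrA.
by rewrite (invr_out xNU) invr_out // unitrMl // unitrMr ?unitrV.
Qed.

Lemma subgroup_conj (H : M2 -> Prop) h : h \is a GRing.unit ->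
  subgroup H -> subgroup (fun y => H (h^-1 * y * h)).
Proof.
move=> hU [H1 HM HV]; split=> [|x y Hx Hy|x Hx]; first by rewrite mulr1 mulVr.
  by have := HM _ _ Hx Hy; rewrite -!mulrA (mulrA h) divrr // mul1r.
by rewrite -invr_conj //; apply: HV.
Qed.

Definition mulr_stable (E : M2 -> Prop) (h : M2) := forall x, E x -> E (x * h).

Lemma gen_mulr_stable (E X : M2 -> Prop) : E 1 ->
  (forall x, X x -> [/\ x \is a GRing.unit, mulr_stable E x & mulr_stable E x^-1]) ->
  forall g, gen X g -> E g.
Proof.
move=> E1 XE g Xg.
suff [_ Eg _] : [/\ g \is a GRing.unit, mulr_stable E g & mulr_stable E g^-1].
  by rewrite -[g]mul1r; exact: Eg.
elim: Xg => [|x /XE //|x y _ [xU Ex Ex'] _ [yU Ey Ey']|x _ [xU Ex Ex']].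
- by rewrite invr1 unitr1; split=> // x Ex; rewrite mulr1.
- rewrite unitrMl // invrM //; split=> // z Ez; rewrite mulrA.
  + exact/Ey/Ex.
  + exact/Ex'/Ey'.
- by rewrite unitrV invrK.
Qed.

Lemma mulmx1_inv n (R : comUnitRingType) (A B : 'M[R]_n.+1) :
  A * B = 1 -> A \is a GRing.unit /\ A^-1 = B.
Proof.
by move=> AB; have [AU _] := mulmx1_unit AB; split=> //; rewrite -[B](mulKr AU) AB mulr1.
Qed.

Lemma mx2M a b c d a' b' c' d' :
  mx2 a b c d * mx2 a' b' c' d' =
  mx2 (a * a' + b * c') (a * b' + b * d') (c * a' + d * c') (c * b' + d * d').
Proof.
apply/matrixP => i j; rewrite !mxE !big_ord_recl big_ord0 !mxE /=.
by case: i => [[|[|//]] ?]; case: j => [[|[|//]] ?]; rewrite /= addr0.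
Qed.

Lemma scale_mx2 k a b c d : k *: mx2 a b c d = mx2 (k * a) (k * b) (k * c) (k * d).
Proof. by apply/matrixP => i j; rewrite !mxE; case: ifP; case: ifP. Qed.

Lemma tr_mx2 a b c d : (mx2 a b c d)^T = mx2 a c b d.
Proof.
by apply/matrixP => i j; rewrite !mxE; case: i => [[|[|//]] ?]; case: j => [[|[|//]] ?].
Qed.

(* [dnorm] cancels common factors 2, so that equal dyadics have equal
   representations, which the membership tests of the closures rely on. *)
Definition dyadic := (Z * nat)%type.

Fixpoint dnorm (m : Z) (k : nat) : dyadic :=
  if k is k'.+1 then if Z.even m then dnorm (Z.div2 m) k' else (m, k) else (m, 0%N).

Definition dadd (x y : dyadic) : dyadic := dnorm (x.1 * 2 ^+ y.2 + y.1 * 2 ^+ x.2) (x.2 + y.2).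
Definition dmul (x y : dyadic) : dyadic := dnorm (x.1 * y.1) (x.2 + y.2).

Lemma Z_even_double m : Z.even m -> m = 2 * Z.div2 m.
Proof. by case: m => [|[]|[]]. Qed.

Section DyadicEval.
Variable F : numFieldType.

Definition deval (x : dyadic) : F := (int_of_Z x.1)%:~R / 2%:R ^+ x.2.

Lemma deval_dnorm m k : deval (dnorm m k) = (int_of_Z m)%:~R / 2%:R ^+ k.
Proof.
elim: k m => [|k IH] m //=; case: ifP => [/Z_even_double {2}-> | //].
rewrite IH rmorphM rmorph_nat intrM exprS invfM mulrACA divff ?mul1r //.
by rewrite pnatr_eq0.
Qed.

Lemma pow2_neq0 k : 2%:R ^+ k != 0 :> F. Proof. by rewrite expf_eq0 pnatr_eq0 andbF. Qed.

Lemma devalD : {morph deval : x y / dadd x y >-> x + y}.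
Proof.
move=> [m k] [n l]; rewrite /dadd deval_dnorm /deval /=.
rewrite rmorphD !rmorphM !rmorphXn rmorph_nat intrD !intrM !rmorphXn /= exprD.
by field; rewrite !pow2_neq0.
Qed.

Lemma devalM : {morph deval : x y / dmul x y >-> x * y}.
Proof.
move=> [m k] [n l]; rewrite /dmul deval_dnorm /deval /= rmorphM intrM exprD.
by field; rewrite !pow2_neq0.
Qed.

End DyadicEval.

Section QuadraticExtension.
Variables (R : Type) (add mul : R -> R -> R) (d : R).

Definition qadd (x y : R * R) : R * R := (add x.1 y.1, add x.2 y.2).
Definition qmul (x y : R * R) : R * R :=
  (add (mul x.1 y.1) (mul d (mul x.2 y.2)), add (mul x.1 y.2) (mul x.2 y.1)).

Variables (A : comNzRingType) (f : R -> A) (r : A).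
Hypotheses (fD : {morph f : x y / add x y >-> x + y})
           (fM : {morph f : x y / mul x y >-> x * y}) (r_sq : r ^+ 2 = f d).

Definition qeval (x : R * R) : A := f x.1 + f x.2 * r.

Lemma qevalD : {morph qeval : x y / qadd x y >-> x + y}.
Proof. by move=> x y; rewrite /qeval /= !fD; ring. Qed.

Lemma qevalM : {morph qeval : x y / qmul x y >-> x * y}.
Proof. by move=> x y; rewrite /qeval /= !fD !fM -r_sq; ring. Qed.

End QuadraticExtension.

Section Matrix2.
Variables (R : Type) (add mul : R -> R -> R).

Definition mmul (A B : (R * R) * (R * R)) : (R * R) * (R * R) :=
  ((add (mul A.1.1 B.1.1) (mul A.1.2 B.2.1), add (mul A.1.1 B.1.2) (mul A.1.2 B.2.2)),
   (add (mul A.2.1 B.1.1) (mul A.2.2 B.2.1), add (mul A.2.1 B.1.2) (mul A.2.2 B.2.2))).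

Variable f : R -> algC.
Hypotheses (fD : {morph f : x y / add x y >-> x + y})
           (fM : {morph f : x y / mul x y >-> x * y}).

Definition meval (A : (R * R) * (R * R)) : M2 := mx2 (f A.1.1) (f A.1.2) (f A.2.1) (f A.2.2).

Lemma mevalM : {morph meval : A B / mmul A B >-> A * B}.
Proof. by move=> A B; rewrite /meval mx2M /= !fD !fM. Qed.

End Matrix2.

Section MulClosure.
Variables (T : eqType) (mul : T -> T -> T) (gs : seq T).

Fixpoint mul_closure_from (n : nat) (seen frontier : seq T) : seq T :=
  if n is n'.+1 then
    let fresh :=
      undup [seq y <- [seq mul x g | x <- frontier, g <- gs] | y \notin seen] in
    if fresh is [::] then seen else mul_closure_from n' (fresh ++ seen) fresh
  else seen.

Definition mul_closure n seeds := mul_closure_from n seeds seeds.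

Lemma mul_closure_ind (P : T -> Prop) n seeds :
  (forall x g, g \in gs -> P x -> P (mul x g)) -> (forall x, x \in seeds -> P x) ->
  forall y, y \in mul_closure n seeds -> P y.
Proof.
move=> Pmul Pseeds; rewrite /mul_closure.
suff fromP seen frontier : (forall x, x \in seen -> P x) -> (forall x, x \in frontier -> P x) ->
    forall y, y \in mul_closure_from n seen frontier -> P y by exact: fromP.
elim: n seen frontier => [|n IH] seen frontier Pseen Pfr //=.
set fresh := undup _.
have Pfresh x : x \in fresh -> P x.
  rewrite mem_undup mem_filter => /andP[_ /allpairsP[[y g] [/= yF gG ->]]].
  exact: Pmul (Pfr _ yF).
case: fresh Pfresh => [//|z zs] Pfresh; apply: IH => // x.
by rewrite mem_cat => /orP[]; [exact: Pfresh | exact: Pseen].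
Qed.

End MulClosure.

Definition Q3 := (dyadic * dyadic)%type.
Definition K7 := (Q3 * Q3)%type.
Definition mat7 := ((K7 * K7) * (K7 * K7))%type.

Definition add3 : Q3 -> Q3 -> Q3 := qadd dadd.
Definition mul3 : Q3 -> Q3 -> Q3 := qmul dadd dmul (3, 0%N).
Definition mulK : K7 -> K7 -> K7 := qmul add3 mul3 ((-1, 0%N), (0, 0%N)).
Definition mul7 : mat7 -> mat7 -> mat7 := mmul (qadd add3) mulK.

Definition eval3 : Q3 -> algC := qeval (deval algC) r3.
Definition evalK : K7 -> algC := qeval eval3 'i.
Definition eval7 : mat7 -> M2 := meval evalK.

Lemma eval3D : {morph eval3 : x y / add3 x y >-> x + y}.
Proof. exact: qevalD r3 (devalD algC). Qed.

Lemma eval3M : {morph eval3 : x y / mul3 x y >-> x * y}.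
Proof.
apply: qevalM (devalD algC) (devalM algC) _.
by rewrite sqrtCK /deval /= divr1.
Qed.

Lemma evalKM : {morph evalK : x y / mulK x y >-> x * y}.
Proof.
apply: qevalM eval3D eval3M _.
by rewrite sqrCi /eval3 /qeval /deval /= !divr1 rmorphN1 mul0r addr0.
Qed.

Lemma eval7M : {morph eval7 : A B / mul7 A B >-> A * B}.
Proof. exact: mevalM (qevalD 'i eval3D) evalKM. Qed.

Definition quarter (a b c d : int) : K7 :=
  let q n := dnorm (Z_of_int n) 2 in ((q a, q b), (q c, q d)).

Lemma evalK_quarter a b c d :
  evalK (quarter a b c d) = 4%:R^-1 * (a%:~R + b%:~R * r3 + (c%:~R + d%:~R * r3) * 'i).
Proof. by rewrite /evalK /eval3 /qeval !deval_dnorm !Z_of_intK; field. Qed.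

Definition one_rep : mat7 :=
  ((quarter 4 0 0 0, quarter 0 0 0 0), (quarter 0 0 0 0, quarter 4 0 0 0)).
Definition s_rep : mat7 :=
  ((quarter 4 0 0 0, quarter 0 0 0 0), (quarter 0 0 0 0, quarter (-4) 0 0 0)).
Definition t_rep : mat7 :=
  ((quarter 1 1 (-1) 1, quarter 1 1 (-1) 1), (quarter (-1) 1 (-1) (-1), quarter 1 (-1) 1 1)).
Definition u_rep : mat7 :=
  ((quarter 1 1 (-1) 1, quarter (-1) 1 (-1) (-1)), (quarter 1 1 (-1) 1, quarter 1 (-1) 1 1)).

Lemma eval7_one : eval7 one_rep = 1.
Proof.
rewrite /eval7 /meval /= !evalK_quarter; apply/matrixP => i j; rewrite !mxE.
by case: i => [[|[|//]] ?]; case: j => [[|[|//]] ?]; rewrite /=; field.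
Qed.

Lemma eval7_s : eval7 s_rep = s7.
Proof. by rewrite /s7 /eval7 /meval /= !evalK_quarter; congr mx2; field. Qed.

Lemma eval7_t : eval7 t_rep = t7.
Proof. by rewrite /t7 scale_mx2 /eval7 /meval /= !evalK_quarter; congr mx2; ring. Qed.

Lemma eval7_u : eval7 u_rep = u7.
Proof.
by rewrite /u7 /t7 scale_mx2 tr_mx2 /eval7 /meval /= !evalK_quarter; congr mx2; ring.
Qed.

Definition gens_rep : seq mat7 := [:: s_rep; t_rep; u_rep].

Definition G7list : seq mat7 :=
  Eval vm_compute in mul_closure mul7 gens_rep 144 [:: one_rep].

(* The conjugate transpose, an inverse on G7 because G7 is unitary; this is only
   ever used through the check [G7list_mul_adj]. *)
Definition adj7 (A : mat7) : mat7 :=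
  let c (x : K7) : K7 := (x.1, (dmul (-1, 0%N) x.2.1, dmul (-1, 0%N) x.2.2)) in
  ((c A.1.1, c A.2.1), (c A.1.2, c A.2.2)).

Lemma G7list_has_gens : all (mem G7list) (one_rep :: gens_rep).
Proof. by vm_compute. Qed.

Lemma G7list_mulr_closed :
  all (fun m => all (fun g => mul7 m g \in G7list) (gens_rep ++ map adj7 gens_rep)) G7list.
Proof. by vm_compute. Qed.

Lemma G7list_mul_adj : all (fun m => mul7 m (adj7 m) == one_rep) G7list.
Proof. by vm_compute. Qed.

Definition class7 (m : mat7) : seq mat7 := undup [seq mul7 (mul7 (adj7 k) m) k | k <- G7list].

Definition generates (gs : seq mat7) : bool :=
  let reached := mul_closure mul7 gs 144 [:: one_rep] in all (fun g => g \in reached) gens_rep.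

Lemma generatesP gs g :
  generates gs -> g \in gens_rep -> g \in mul_closure mul7 gs 144 [:: one_rep].
Proof. by rewrite /generates => /allP; apply. Qed.

Lemma t7_R2_S7_table :
  let S7list := class7 s_rep in
  all (fun b => all (fun c => generates [:: t_rep; b; c]) S7list) (class7 u_rep).
Proof. by vm_compute. Qed.

Definition in_G7list (x : M2) : Prop := exists2 m, m \in G7list & x = eval7 m.

Lemma G7list_inv m : m \in G7list ->
  eval7 m \is a GRing.unit /\ (eval7 m)^-1 = eval7 (adj7 m).
Proof.
by move=> mG; apply: mulmx1_inv; rewrite -eval7M (eqP (allP G7list_mul_adj m mG)) eval7_one.
Qed.

Lemma mulr_stable_G7list g :
  g \in gens_rep ++ map adj7 gens_rep -> mulr_stable in_G7list (eval7 g).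
Proof.
move=> gG _ [m mG ->]; exists (mul7 m g); last by rewrite eval7M.
exact: allP (allP G7list_mulr_closed m mG) g gG.
Qed.

Lemma gens7_rep x : x = s7 \/ x = t7 \/ x = u7 -> exists2 r, r \in gens_rep & x = eval7 r.
Proof.
by case=> [->|[->|->]]; [exists s_rep | exists t_rep | exists u_rep];
  rewrite ?eval7_s ?eval7_t ?eval7_u ?inE ?eqxx ?orbT.
Qed.

Lemma G7_in_G7list g : G7 g -> in_G7list g.
Proof.
apply: gen_mulr_stable => [|x /gens7_rep[r rG ->]].
  by exists one_rep; rewrite ?eval7_one ?(allP G7list_has_gens) ?mem_head.
have [rU ->] : eval7 r \is a GRing.unit /\ (eval7 r)^-1 = eval7 (adj7 r).
  by apply/G7list_inv/(allP G7list_has_gens); rewrite inE rG orbT.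
by split=> //; apply: mulr_stable_G7list; rewrite mem_cat ?map_f ?rG ?orbT.
Qed.

Lemma G7_unit g : G7 g -> g \is a GRing.unit.
Proof. by case/G7_in_G7list => m /G7list_inv[gU _] ->. Qed.

Lemma cls7_conj x y h : G7 h -> cls7 x y -> cls7 x (h * y * h^-1).
Proof.
move=> Gh [k Gk ->]; exists (k * h^-1); first exact: genM Gk (genV Gh).
by rewrite invrM ?unitrV ?G7_unit // invrK !mulrA.
Qed.

Lemma cls7_class7 m y : cls7 (eval7 m) y -> exists2 c, c \in class7 m & y = eval7 c.
Proof.
case=> h /G7_in_G7list[k kG ->] ->; exists (mul7 (mul7 (adj7 k) m) k).
  by rewrite mem_undup; apply/mapP; exists k.
by rewrite !eval7M; have [_ ->] := G7list_inv kG.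
Qed.

Lemma subgroup_mul_closure (H : M2 -> Prop) gs n : subgroup H ->
  {in gs, forall g, H (eval7 g)} ->
  {in mul_closure mul7 gs n [:: one_rep], forall m, H (eval7 m)}.
Proof.
case=> H1 HM _ Hgs; apply: mul_closure_ind => [x g gG Hx|x].
  by rewrite eval7M; apply: HM Hx (Hgs g gG).
by rewrite inE => /eqP->; rewrite eval7_one.
Qed.

Lemma t7_R2_S7_generate_G7 (H : M2 -> Prop) : subgroup H -> H t7 ->
  (exists2 b, R2 b & H b) -> (exists2 c, S7 c & H c) -> forall g, G7 g -> H g.
Proof.
move=> Hgrp Ht [b R2b Hb] [c Sc Hc].
rewrite /R2 -eval7_u in R2b; rewrite /S7 -eval7_s in Sc.
have [b' b'R2 eb] := cls7_class7 R2b; have [c' c'S ec] := cls7_class7 Sc.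
have Htbc : {in [:: t_rep; b'; c'], forall g, H (eval7 g)}.
  by move=> x; rewrite !inE => /or3P[] /eqP->; rewrite ?eval7_t -?eb -?ec.
have Hgens : {in gens_rep, forall g, H (eval7 g)}.
  move=> g /(generatesP (allP (allP t7_R2_S7_table b' b'R2) c' c'S)).
  exact: subgroup_mul_closure Hgrp Htbc g.
by apply: gen_min Hgrp _ => x /gens7_rep[r rG ->]; exact: Hgens.
Qed.

Lemma R1_R2_S7_generate_G7 (H : M2 -> Prop) : subgroup H ->
  (exists2 a, R1 a & H a) -> (exists2 b, R2 b & H b) -> (exists2 c, S7 c & H c) ->
  forall g, G7 g -> H g.
Proof.
move=> Hgrp [a [h Gh ->] Ha] [b R2b Hb] [c Sc Hc] g Gg.
have hU := G7_unit Gh.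
have HhK y : H (h^-1 * (h * y * h^-1) * h) = H y by rewrite !mulrA mulVr // mul1r mulrVK.
suff: H (h^-1 * (h * g * h^-1) * h) by rewrite HhK.
apply: (t7_R2_S7_generate_G7 (subgroup_conj hU Hgrp) Ha).
- by exists (h * b * h^-1); [exact: cls7_conj | rewrite HhK].
- by exists (h * c * h^-1); [exact: cls7_conj | rewrite HhK].
- exact: genM (genM Gh Gg) (genV Gh).
Qed.

Theorem proposition3p15 (X : 'M[algC]_2 -> Prop) :
  (forall x, X x -> G7 x /\ is_reflection x) ->
  (exists2 x, X x & (R1 x \/ inv_set R1 x)) ->
  (exists2 x, X x & (R2 x \/ inv_set R2 x)) ->
  (exists2 x, X x & S7 x) ->
  forall g, gen X g <-> G7 g.
Proof.
move=> XG7 [x1 X1 R1x1] [x2 X2 R2x2] [x3 X3 Sx3] g; split.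
  by apply: gen_min => [|x /XG7[]]; first exact: gen_subgroup.
apply: R1_R2_S7_generate_G7; first exact: gen_subgroup.
- exact: gen_class_or_inv X1 R1x1.
- exact: gen_class_or_inv X2 R2x2.
- by exists x3 => //; exact: gen_in.
Qed.
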